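(* Let $\hat x=(\dots,x_2,x_1)\in\mathrm{Im}(\Psi^+)$ satisfy $x_m\le p_m$ for all $m\ge1$, and let $k\ge1$. The following are equivalent: (1) $c_{k+2l}x_k-c_{k+2l-1}x_{k+1}\ge0$ for all $l\ge1$; (2) $\gamma_kx_k-x_{k+1}\ge0$.
   Context: Let $a_1,a_2\in\mathbb Z_{\ge1}$ with $a_1a_2>4$, $A=\begin{pmatrix}2&-a_1\\-a_2&2\end{pmatrix}$, $\mathfrak g=\mathfrak g(A)$ with simple roots $\alpha_1,\alpha_2$, coroots $\alpha_i^\vee$ ($\langle\alpha_2,\alpha_1^\vee\rangle=-a_1$, $\langle\alpha_1,\alpha_2^\vee\rangle=-a_2$), fundamental weights $\Lambda_1,\Lambda_2$. For $k\in\mathbb Z$, $i_k=1$ if $k$ odd, $i_k=2$ if $k$ even. $\mathbb Z^{+\infty}_{\ge0}$ is the set of sequences $(\dots,x_2,x_1)$ of nonnegative integers, almost all zero, with the Nakashima–Zelevinsky crystal structure for the sequence $(\dots,i_2,i_1)$, and $\Psi^+:\mathcal B(\infty)\hookrightarrow\mathbb Z^{+\infty}_{\ge0}$ the corresponding crystal embedding of the crystal basis of $U_q^-(\mathfrak g)$ (sending the highest element to the zero sequence). Put $\alpha=\frac{a_1a_2+\sqrt{a_1^2a_2^2-4a_1a_2}}{2a_2}$, $\beta=\frac{a_1a_2+\sqrt{a_1^2a_2^2-4a_1a_2}}{2a_1}$, $\gamma_k=\alpha$ ($k$ even), $\beta$ ($k$ odd). Fix $\lambda=k_1\Lambda_1-k_2\Lambda_2$,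 $k_1,k_2\in\mathbb Z_{>0}$, with: if $a_1,a_2\ge2$, $k_2\le k_1<(a_1-1)k_2$ or $k_1<k_2\le(a_2-1)k_1$; if $a_1=1$, $2k_1\le k_2\le(a_2-2)k_1$; if $a_2=1$, $2k_2\le k_1\le(a_1-2)k_2$. Let $p_0=k_2$, $p_1=k_1$, $p_{m+2}=a_2p_{m+1}-p_m$ ($m\ge0$ even), $p_{m+2}=a_1p_{m+1}-p_m$ ($m\ge0$ odd). Define $c_0=0$, $c_1=1$, $c_{j+2}=a_1c_{j+1}-c_j$ ($j$ even), $c_{j+2}=a_2c_{j+1}-c_j$ ($j$ odd). *)

From HB Require Import structures.
From mathcomp Require Import all_boot all_order all_algebra.
Set Implicit Arguments. Unset Strict Implicit. Unset Printing Implicit Defensive.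
Import Order.TTheory GRing.Theory Num.Theory.
Local Open Scope ring_scope.

Definition ik (k : nat) : nat := if odd k then 1%N else 2%N.

(* <h_i, alpha_j> = A_{ij} for A = [[2, -a1], [-a2, 2]] (indices i,j in {1,2}). *)
Definition cartan (a1 a2 : nat) (i j : nat) : int :=
  if i == j then 2 else if i == 1%N then - (a1%:Z) else - (a2%:Z).

(* An element of Z^{+infty}_{>=0} is represented by a finite list
   [:: x_1; x_2; ...; x_n] (all further entries being 0). *)
Definition xk (x : seq nat) (k : nat) : nat := nth 0%N x k.-1.

Definition nz_sigma (a1 a2 : nat) (x : seq nat) (k : nat) : int :=
  (xk x k)%:Z + \sum_(k.+1 <= j < (size x).+1) cartan a1 a2 (ik k) (ik j) * (xk x j)%:Z.

(* sigma^{(i)}(x) = max_{k : i_k = i} sigma_k(x); sigma_k(x) = 0 for k > size x,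
   and such k with i_k = i exist, hence the max with 0. *)
Definition nz_sigmamax (a1 a2 : nat) (x : seq nat) (i : nat) : int :=
  foldr Num.max 0 [seq nz_sigma a1 a2 x k | k <- iota 1 (size x) & ik k == i].

(* m_f = min { k : i_k = i, sigma_k(x) = sigma^{(i)}(x) }; it is <= size x + 2. *)
Definition nz_mf (a1 a2 : nat) (x : seq nat) (i : nat) : nat :=
  let s := iota 1 (size x).+2 in
  nth 0%N s (find (fun k => (ik k == i) && (nz_sigma a1 a2 x k == nz_sigmamax a1 a2 x i)) s).

Definition nz_ftilde (a1 a2 : nat) (i : nat) (x : seq nat) : seq nat :=
  let m := nz_mf a1 a2 x i in set_nth 0%N x m.-1 (xk x m).+1.

(* Im(Psi^+): the subcrystal generated by the zero sequence under the f~_i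
   (B(infty) is generated by u_infty under the f~_i, and Psi^+ is a strict
   crystal embedding with Psi^+(u_infty) = 0). *)
Definition in_Im_Psi (a1 a2 : nat) (x : nat -> nat) : Prop :=
  exists w : seq nat, all (fun i => (i == 1%N) || (i == 2%N)) w /\
    forall m, (0 < m)%N -> x m = xk (foldr (nz_ftilde a1 a2) [::] w) m.

(* (p_m, p_{m+1}) with p_0 = k2, p_1 = k1,
   p_{m+2} = a2 p_{m+1} - p_m (m even), a1 p_{m+1} - p_m (m odd). *)
Fixpoint ppair (a1 a2 k1 k2 : nat) (m : nat) : int * int :=
  match m with
  | 0 => (k2%:Z, k1%:Z)
  | m'.+1 => let uv := ppair a1 a2 k1 k2 m' in
             (uv.2, (if odd m' then a1%:Z else a2%:Z) * uv.2 - uv.1)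
  end.
Definition pseq (a1 a2 k1 k2 : nat) (m : nat) : int := (ppair a1 a2 k1 k2 m).1.

(* c_0 = 0, c_1 = 1, c_{j+2} = a1 c_{j+1} - c_j (j even), a2 c_{j+1} - c_j (j odd). *)
Fixpoint cpair (a1 a2 : nat) (j : nat) : int * int :=
  match j with
  | 0 => (0, 1)
  | j'.+1 => let uv := cpair a1 a2 j' in
             (uv.2, (if odd j' then a2%:Z else a1%:Z) * uv.2 - uv.1)
  end.
Definition cseq (a1 a2 : nat) (j : nat) : int := (cpair a1 a2 j).1.

Definition alpha (R : rcfType) (a1 a2 : nat) : R :=
  ((a1 * a2)%:R + Num.sqrt ((a1 * a2)%:R ^+ 2 - 4 * (a1 * a2)%:R)) / (2 * a2%:R).
Definition beta (R : rcfType) (a1 a2 : nat) : R :=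
  ((a1 * a2)%:R + Num.sqrt ((a1 * a2)%:R ^+ 2 - 4 * (a1 * a2)%:R)) / (2 * a1%:R).
Definition gamma (R : rcfType) (a1 a2 : nat) (k : nat) : R :=
  if odd k then beta R a1 a2 else alpha R a1 a2.

From HB Require Import structures.
From mathcomp Require Import all_boot all_order all_algebra.
From mathcomp Require Import lra ring.
Import Order.TTheory GRing.Theory Num.Theory.
Set Implicit Arguments. Unset Strict Implicit. Unset Printing Implicit Defensive.
Local Open Scope ring_scope.

(* Write r = gamma_k and J = k - 1 + 2 l.  Then
     c_{J+1} x_k - c_J x_{k+1} = E_J x_k - c_J (x_{k+1} - r x_k),
   where the defect E_J = c_{J+1} - r c_J is positive and is divided by
   alpha beta >= 2 whenever l grows by one, while c_J >= 1.  If
   x_{k+1} <= r x_k every combination is therefore nonnegative.  Otherwise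
   x_{k+1} - r x_k >= 1 / (a x_{k+1}) with a = a_{i_k}, b = a_{i_{k+1}}: r is a root of
   a t^2 - a b t + b and the norm a x_{k+1}^2 - a b x_k x_{k+1} + b x_k^2 is a
   positive integer; so the second term eventually wins. *)

Definition disc (R : rcfType) (n : R) : R := Num.sqrt (n ^+ 2 - 4 * n).

(* The two roots of [a t^2 - a b t + b]. *)
Definition qroot_hi (R : rcfType) (a b : R) : R := (a * b + disc (a * b)) / (2 * a).
Definition qroot_lo (R : rcfType) (a b : R) : R := (a * b - disc (a * b)) / (2 * a).

Section QuadraticRoots.
Variables (R : rcfType) (a b : R).
Hypotheses (a_gt0 : 0 < a) (b_gt0 : 0 < b) (ab_ge4 : 4 <= a * b).

Lemma sqr_disc : disc (a * b) ^+ 2 = (a * b) ^+ 2 - 4 * (a * b).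
Proof. by rewrite sqr_sqrtr //; have := ab_ge4; set n := a * b; nra. Qed.

Lemma disc_ge0 : 0 <= disc (a * b).
Proof. exact: sqrtr_ge0. Qed.

Lemma disc_le : disc (a * b) <= a * b.
Proof. have := sqr_disc; have := disc_ge0; have := ab_ge4; set n := a * b; nra. Qed.

Lemma qroot_lo_ge0 : 0 <= qroot_lo a b.
Proof. by rewrite divr_ge0 ?subr_ge0 ?disc_le // mulr_ge0 // ltW. Qed.

Lemma qroot_lo_le_hi : qroot_lo a b <= qroot_hi a b.
Proof.
apply: ler_wpM2r; first by rewrite invr_ge0 mulr_ge0 ?ltW.
by have := disc_ge0; lra.
Qed.

Lemma qroot_hi_gt0 : 0 < qroot_hi a b.
Proof.
rewrite divr_gt0 ?mulr_gt0 //; have := disc_ge0; have := ab_ge4.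
by set n := a * b; set d := disc n; lra.
Qed.

Lemma qroot_norm p q :
  a * (p - qroot_hi a b * q) * (p - qroot_lo a b * q) =
  a * p ^+ 2 - a * b * p * q + b * q ^+ 2.
Proof.
apply/eqP; rewrite -subr_eq0; apply/eqP.
transitivity (((a * b) ^+ 2 - 4 * (a * b) - disc (a * b) ^+ 2) * q ^+ 2 / (4 * a)).
  by rewrite /qroot_hi /qroot_lo; field; rewrite gt_eqF.
by rewrite sqr_disc subrr !mul0r.
Qed.

Lemma qroot_hi_swap : (a - qroot_hi b a) * qroot_hi a b = 1.
Proof.
apply/eqP; rewrite -subr_eq0; apply/eqP.
transitivity (((a * b) ^+ 2 - 4 * (a * b) - disc (a * b) ^+ 2) / (4 * a * b)).
  by rewrite /qroot_hi [b * a]mulrC; field; rewrite !gt_eqF.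
by rewrite sqr_disc subrr mul0r.
Qed.

End QuadraticRoots.

Lemma qroot_hi_mul_ge2 (R : rcfType) (a b : R) : 0 < a -> 0 < b -> 5 <= a * b ->
  2 <= qroot_hi a b * qroot_hi b a.
Proof.
move=> a_gt0 b_gt0 ab_ge5.
have ab_ge4 : 4 <= a * b by rewrite (le_trans _ ab_ge5) // ler_nat.
rewrite -subr_ge0.
have -> : qroot_hi a b * qroot_hi b a - 2 =
    ((a * b + disc (a * b)) ^+ 2 - 8 * (a * b)) / (4 * (a * b)).
  by rewrite /qroot_hi [b * a]mulrC; field; rewrite !gt_eqF.
rewrite divr_ge0 // ?mulr_ge0 ?ltW ?mulr_gt0 //.
have := sqr_disc ab_ge4; have := disc_ge0 a b.
by move: ab_ge5; set n := a * b; nra.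
Qed.

(* The norm [a p^2 - a b p q + b q^2] of [p - r q] is a positive integer. *)
Lemma qroot_hi_approx (R : rcfType) (a b p q : nat) : (4 <= a * b)%N ->
  0 < p%:R - qroot_hi (a%:R : R) b%:R * q%:R ->
  1 <= a%:R * p%:R * (p%:R - qroot_hi (a%:R : R) b%:R * q%:R).
Proof.
move=> ab_ge4.
have a_gt0 : (0 < a%:R :> R) by rewrite ltr0n; case: a ab_ge4.
have b_gt0 : (0 < b%:R :> R) by rewrite ltr0n; case: b ab_ge4 => //; rewrite muln0.
have ab_ge4R : (4 <= a%:R * b%:R :> R) by rewrite -natrM (ler_nat R).
move=> d_gt0.
have lo_ge0 := qroot_lo_ge0 a_gt0 ab_ge4R.
have lo_le_hi := qroot_lo_le_hi (b%:R) a_gt0.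
set r := qroot_hi _ _ in d_gt0 lo_le_hi *; set r' := qroot_lo _ _ in lo_ge0 lo_le_hi.
set d := _ - r * q%:R in d_gt0 *.
have d_le : d <= p%:R - r' * q%:R by rewrite lerD2l lerN2 ler_wpM2r.
have norm_ge1 : 1 <= a%:R * d * (p%:R - r' * q%:R).
  have norm_gt0 : 0 < a%:R * d * (p%:R - r' * q%:R).
    by rewrite !mulr_gt0 // (lt_le_trans d_gt0).
  move: norm_gt0; rewrite qroot_norm // -!natrX -!natrM addrAC -natrD.
  by rewrite subr_gt0 ltr_nat lerBrDr addrC natr1 ler_nat.
apply: le_trans norm_ge1 _; rewrite [_ * _ * d]mulrAC.
by apply: ler_wpM2l; [rewrite mulr_ge0 // ltW | rewrite gerBl mulr_ge0].
Qed.

Lemma ltr_nat_exp (R : realDomainType) (m : R) n : 2 <= m -> n%:R < m ^+ n.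
Proof.
move=> m_ge2; apply: (@lt_le_trans _ _ (2 ^+ n)).
  by rewrite -natrX ltr_nat ltn_expl.
by rewrite lerXn2r // nnegrE // (le_trans _ m_ge2).
Qed.

Section PeriodicContinuants.
Variables (R : rcfType) (a c : nat -> R).
Hypotheses (a_gt0 : forall j, 0 < a j) (a_mul_ge4 : forall j, 4 <= a j * a j.+1).
Hypothesis aSS : forall j, a j.+2 = a j.
Hypotheses (c0 : c 0 = 0) (c1 : c 1 = 1).
Hypothesis cSS : forall j, c j.+2 = a j.+1 * c j.+1 - c j.

Local Notation g j := (qroot_hi (a j) (a j.+1)).

Definition cont_defect j := c j.+1 - g j.+1 * c j.

Lemma qroot_hi_seq_gt0 j : 0 < g j.
Proof. exact: qroot_hi_gt0. Qed.

Lemma qroot_hiSS j : g j.+2 = g j.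
Proof. by rewrite !aSS. Qed.

Lemma qroot_hi_periodic j l : g (j + 2 * l) = g j.
Proof.
by elim: l => [|l IH]; rewrite ?muln0 ?addn0 // mulnS addnCA add2n qroot_hiSS.
Qed.

Lemma qroot_hi_mul_const j : g j * g j.+1 = g 0 * g 1.
Proof. by elim: j => [|j IH] //; rewrite qroot_hiSS mulrC. Qed.

Lemma cont_defectS j : cont_defect j.+1 * g j.+1 = cont_defect j.
Proof.
rewrite /cont_defect cSS [a j.+3]aSS.
transitivity ((a j.+1 - qroot_hi (a j.+2) (a j.+1)) * g j.+1 * c j.+1 - g j.+1 * c j).
  by ring.
by rewrite qroot_hi_swap ?mul1r.
Qed.

Lemma cont_defect_gt0 j : 0 < cont_defect j.
Proof.
elim: j => [|j IH]; first by rewrite /cont_defect c0 c1 mulr0 subr0 ltr01.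
by move: IH; rewrite -(cont_defectS j) pmulr_lgt0 // qroot_hi_seq_gt0.
Qed.

Lemma cont_defectE j : c j.+1 = cont_defect j + g j.+1 * c j.
Proof. by rewrite /cont_defect subrK. Qed.

Lemma cont_ge0 j : 0 <= c j.
Proof.
elim: j => [|j IH]; first by rewrite c0.
rewrite cont_defectE addr_ge0 ?(ltW (cont_defect_gt0 j)) //.
exact: mulr_ge0 (ltW (qroot_hi_seq_gt0 _)) IH.
Qed.

Lemma cont_defect_le j : cont_defect j <= c j.+1.
Proof. by rewrite cont_defectE lerDl mulr_ge0 ?cont_ge0 ?ltW ?qroot_hi_seq_gt0. Qed.

Lemma cont_gt0 j : 0 < c j.+1.
Proof. exact: lt_le_trans (cont_defect_gt0 j) (cont_defect_le j). Qed.

Lemma cont_defect_decay j l : cont_defect j = cont_defect (j + 2 * l) * (g 0 * g 1) ^+ l.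
Proof.
elim: l => [|l IH]; first by rewrite muln0 addn0 mulr1.
rewrite IH mulnS addnCA add2n -(cont_defectS (j + 2 * l)) -(cont_defectS (j + 2 * l).+1).
by rewrite -(qroot_hi_mul_const (j + 2 * l).+1) exprS; ring.
Qed.

Lemma cont_comb j p q : c j.+1 * q - c j * p = cont_defect j * q - c j * (p - g j.+1 * q).
Proof. by rewrite /cont_defect; ring. Qed.

End PeriodicContinuants.

Definition acoef (a1 a2 j : nat) : nat := if odd j then a1 else a2.

Lemma cseqSS a1 a2 j :
  cseq a1 a2 j.+2 = (acoef a1 a2 j.+1)%:Z * cseq a1 a2 j.+1 - cseq a1 a2 j.
Proof. by rewrite /cseq /acoef /=; case: (odd j). Qed.

Lemma gammaE (R : rcfType) a1 a2 k :
  gamma R a1 a2 k = qroot_hi (acoef a1 a2 k)%:R (acoef a1 a2 k.+1)%:R.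
Proof.
by rewrite /gamma /alpha /beta /acoef /=; case: (odd k); rewrite /= natrM // [a1%:R * _]mulrC.
Qed.

Section CartanContinuants.
Variables (R : rcfType) (a1 a2 : nat).
Hypothesis a12_gt4 : (4 < a1 * a2)%N.

Let a j : R := (acoef a1 a2 j)%:R.
Let c j : R := (cseq a1 a2 j)%:~R.

Lemma acoef_mul j : (acoef a1 a2 j * acoef a1 a2 j.+1)%N = (a1 * a2)%N.
Proof. by rewrite /acoef /=; case: (odd j); rewrite // mulnC. Qed.

Let a_mul_ge5 j : 5 <= a j * a j.+1.
Proof. by rewrite -natrM acoef_mul ler_nat. Qed.

Let a_mul_ge4 j : 4 <= a j * a j.+1.
Proof. by rewrite (le_trans _ (a_mul_ge5 j)) // ler_nat. Qed.

Let a_gt0 j : 0 < a j.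
Proof.
rewrite ltr0n /acoef; case: odd; first by case: a1 a12_gt4.
by case: a2 a12_gt4 => //; rewrite muln0.
Qed.

Let aSS j : a j.+2 = a j.
Proof. by rewrite /a /acoef /= negbK. Qed.

Let c0 : c 0 = 0. Proof. by []. Qed.
Let c1 : c 1 = 1. Proof. by []. Qed.

Let cSS j : c j.+2 = a j.+1 * c j.+1 - c j.
Proof. by rewrite /c cseqSS rmorphB rmorphM /= -pmulrn. Qed.

Local Notation defect := (cont_defect a c).
Let defect_gt0 := cont_defect_gt0 a_gt0 a_mul_ge4 aSS c0 c1 cSS.
Let defect_le := cont_defect_le a_gt0 a_mul_ge4 aSS c0 c1 cSS.
Let defect_decay := cont_defect_decay a_gt0 a_mul_ge4 aSS cSS.
Let c_ge0 := cont_ge0 a_gt0 a_mul_ge4 aSS c0 c1 cSS.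

Let c_nat j : exists n, c j = n%:R.
Proof.
have cseq_ge0 : 0 <= cseq a1 a2 j by rewrite -(ler0z R) c_ge0.
by exists `|cseq a1 a2 j|%N; rewrite /c -{1}(gez0_abs cseq_ge0) -pmulrn.
Qed.

Let c_ge1 j : 1 <= c j.+1.
Proof. by have := cont_gt0 a_gt0 a_mul_ge4 aSS c0 c1 cSS j; rewrite /c ltr0z ler1z. Qed.

Lemma cseq_comb_ge0E j l p q :
  (0 <= cseq a1 a2 (j.+1 + 2 * l) * q%:Z - cseq a1 a2 (j.+1 + 2 * l - 1) * p%:Z) =
  (0 <= defect (j + 2 * l) * q%:R - c (j + 2 * l) * (p%:R - gamma R a1 a2 j.+1 * q%:R)).
Proof.
rewrite -(ler0z R) rmorphB !rmorphM /= -!pmulrn addSn subn1 /=.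
by rewrite -/(c _) -/(c _) (cont_comb a) -addSn (qroot_hi_periodic aSS) gammaE.
Qed.

Lemma cseq_comb_eventually_lt0 j p q :
  let d := p%:R - gamma R a1 a2 j.+1 * q%:R in 0 < d ->
  exists2 l, (1 <= l)%N & defect (j + 2 * l) * q%:R - c (j + 2 * l) * d < 0.
Proof.
move=> d d_gt0.
have approx : 1 <= a j.+1 * p%:R * d.
  by move: d_gt0; rewrite /d gammaE; apply: qroot_hi_approx; rewrite acoef_mul ltnW.
have gamma_gt0 : 0 < gamma R a1 a2 j.+1.
  by rewrite gammaE; exact: qroot_hi_gt0 (a_gt0 _) (a_mul_ge4 _).
have p_gt0 : 0 < p%:R :> R.
  by apply: lt_le_trans d_gt0 _; rewrite /d gerBl mulr_ge0 // ltW.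
have [N cN] := c_nat j.+1.
pose M := (N * q * acoef a1 a2 j.+1 * p)%N.
exists M.+1 => //.
set mu := qroot_hi (a 0) (a 1) * qroot_hi (a 1) (a 2).
have mu_big : M.+1%:R < mu ^+ M.+1.
  by apply: ltr_nat_exp; rewrite /mu [a 2]aSS qroot_hi_mul_ge2.
have decay := defect_decay j M.+1.
have C_ge1 : 1 <= c (j + 2 * M.+1) by rewrite mulnS addnCA add2n c_ge1.
set E := defect (j + 2 * M.+1) in decay *; set C := c (j + 2 * M.+1) in C_ge1 *.
set m := mu ^+ _ in mu_big decay.
have m_gt0 : 0 < m by apply: le_lt_trans mu_big.
rewrite -(pmulr_llt0 _ (mulr_gt0 m_gt0 (mulr_gt0 (a_gt0 j.+1) p_gt0))).
have -> : (E * q%:R - C * d) * (m * (a j.+1 * p%:R)) =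
    defect j * (q%:R * a j.+1 * p%:R) - C * (m * (a j.+1 * p%:R * d)).
  by rewrite decay; ring.
have head_le : defect j * (q%:R * a j.+1 * p%:R) <= M%:R.
  rewrite /M !natrM -cN -!mulrA; apply: ler_wpM2r; last exact: defect_le.
  by rewrite !mulr_ge0 // ltW.
have tail_ge : m <= C * (m * (a j.+1 * p%:R * d)).
  apply: le_trans (ler_peMr (ltW m_gt0) approx) _; apply: ler_peMl C_ge1.
  by rewrite mulr_ge0 ?ltW // (lt_le_trans ltr01 approx).
have : (M%:R : R) < M.+1%:R by rewrite ltr_nat.
lra.
Qed.

Lemma cseq_comb_ge0P k p q : (0 < k)%N ->
  (forall l, (1 <= l)%N ->
     0 <= cseq a1 a2 (k + 2 * l) * q%:Z - cseq a1 a2 (k + 2 * l - 1) * p%:Z)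
  <-> p%:R <= gamma R a1 a2 k * q%:R.
Proof.
case: k => // j _; rewrite -subr_le0; split=> [comb_ge0 | d_le0 l _].
  rewrite leNgt; apply/negP => /cseq_comb_eventually_lt0 [l /comb_ge0].
  by rewrite cseq_comb_ge0E leNgt => /negP.
rewrite cseq_comb_ge0E subr_ge0 (le_trans (mulr_ge0_le0 (c_ge0 _) d_le0)) //.
by rewrite mulr_ge0 // ltW // defect_gt0.
Qed.

End CartanContinuants.

Theorem proposition4p5 (R : rcfType) (a1 a2 k1 k2 : nat)
  (ha1 : (1 <= a1)%N) (ha2 : (1 <= a2)%N) (ha : (4 < a1 * a2)%N)
  (hk1 : (0 < k1)%N) (hk2 : (0 < k2)%N)
  (hlam2 : (2 <= a1)%N -> (2 <= a2)%N ->
      ((k2 <= k1)%N && (k1 < (a1 - 1) * k2)%N) \/ ((k1 < k2)%N && (k2 <= (a2 - 1) * k1)%N))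
  (hlam1 : a1 = 1%N -> (2 * k1 <= k2)%N && (k2 <= (a2 - 2) * k1)%N)
  (hlam3 : a2 = 1%N -> (2 * k2 <= k1)%N && (k1 <= (a1 - 2) * k2)%N)
  (x : nat -> nat) (hx : in_Im_Psi a1 a2 x)
  (hxp : forall m, (1 <= m)%N -> (x m)%:Z <= pseq a1 a2 k1 k2 m)
  (k : nat) (hk : (1 <= k)%N) :
  (forall l, (1 <= l)%N ->
      0 <= cseq a1 a2 (k + 2 * l) * (x k)%:Z - cseq a1 a2 (k + 2 * l - 1) * (x k.+1)%:Z)
  <-> 0 <= gamma R a1 a2 k * (x k)%:R - (x k.+1)%:R.
Proof. by rewrite subr_ge0; apply: (cseq_comb_ge0P R ha). Qed.
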